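(* Let $\phi(z)\equiv\forall x_1\exists y_1\forall x_2\cdots\forall x_r\exists y_r\,\chi(z,x_1,\dots,x_r,y_1,\dots,y_r)$ be a positive formula in the language of groups, where $\chi$ is a positive quantifier-free formula. Then there are a system of equations $\Sigma=1$ and a positive formula $\theta(z,u,v)\equiv\forall x_1\exists y_1\forall x_2\cdots\forall x_r\exists y_r\,\Sigma(z,u,v,x_1,\dots,x_r,y_1,\dots,y_r)=1$ such that $\forall z\forall u\forall v\,(\phi(z)\rightarrow\theta(z,u,v))$ is valid in every group, and moreover a non-abelian free group $\mathbb F$ satisfies $\forall z\forall u\forall v\,([u,v]=1\vee(\phi(z)\leftrightarrow\theta(z,u,v)))$. In particular, if $\phi$ is a non-trivial positive sentence, then $\forall u\forall v\,\theta(u,v)$ is a non-trivial positive sentence.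
   Context: Positive formulas are those built without negations (no constants). A positive sentence is non-trivial if it is false in a non-abelian free group. *)

From mathcomp Require Import all_boot.
Set Implicit Arguments.
Unset Strict Implicit.
Unset Printing Implicit Defensive.

Record group := Group {
  carrier :> Type;
  gmul : carrier -> carrier -> carrier;
  ginv : carrier -> carrier;
  gone : carrier;
  gmulA : forall x y z, gmul x (gmul y z) = gmul (gmul x y) z;
  gmul1 : forall x, gmul gone x = x;
  gmulV : forall x, gmul (ginv x) x = gone
}.

Definition commutator (G : group) (u v : G) : G :=
  @gmul G (@gmul G (@ginv G u) (@ginv G v)) (@gmul G u v).

Definition is_hom (G H : group) (h : G -> H) : Prop :=
  forall x y, h (@gmul G x y) = @gmul H (h x) (h y).

Definition free_on (F : group) (I : Type) (b : I -> F) : Prop :=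
  forall (G : group) (f : I -> G),
    exists h : F -> G, [/\ is_hom h, (forall i, h (b i) = f i) &
      (forall h' : F -> G, is_hom h' -> (forall i, h' (b i) = f i) ->
          forall x, h' x = h x)].

Definition nonabelian_free (F : group) : Prop :=
  exists (I : Type) (b : I -> F), free_on b /\ exists i j : I, i <> j.

Inductive term (V : Type) :=
  | tvar of V
  | tone
  | tmul of term V & term V
  | tinv of term V.
Arguments tone {V}.

Fixpoint teval (G : group) (V : Type) (e : V -> G) (t : term V) : G :=
  match t with
  | tvar v => e v
  | tone => gone G
  | tmul t1 t2 => @gmul G (teval e t1) (teval e t2)
  | tinv t1 => @ginv G (teval e t1)
  end.

Inductive qfpos (V : Type) :=
  | qeq of term V & term V
  | qand of qfpos V & qfpos V
  | qor of qfpos V & qfpos V.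

Fixpoint qeval (G : group) (V : Type) (e : V -> G) (f : qfpos V) : Prop :=
  match f with
  | qeq s t => teval e s = teval e t
  | qand f1 f2 => qeval e f1 /\ qeval e f2
  | qor f1 f2 => qeval e f1 \/ qeval e f2
  end.

Definition sys_eval (G : group) (V : Type) (e : V -> G) (S : seq (term V)) : Prop :=
  foldr (fun w P => teval e w = gone G /\ P) True S.

Fixpoint AE (G : group) (r : nat) (P : seq G -> seq G -> Prop) : Prop :=
  match r with
  | 0 => P [::] [::]
  | r'.+1 => forall x : G, exists y : G,
        AE r' (fun xs ys => P (x :: xs) (y :: ys))
  end.

(* variables of phi(z): z_1..z_m, x_1..x_r, y_1..y_r *)
Definition phivar (m r : nat) : Type := ('I_m + ('I_r + 'I_r))%type.
(* variables of theta(z,u,v): z_1..z_m, u (= true), v (= false), x's, y's *)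
Definition thetavar (m r : nat) : Type := ('I_m + (bool + ('I_r + 'I_r)))%type.

Definition phi_env (G : group) (m r : nat) (z : 'I_m -> G) (xs ys : seq G)
  (w : phivar m r) : G :=
  match w with
  | inl i => z i
  | inr (inl i) => nth (gone G) xs i
  | inr (inr i) => nth (gone G) ys i
  end.

Definition theta_env (G : group) (m r : nat) (z : 'I_m -> G) (u v : G)
  (xs ys : seq G) (w : thetavar m r) : G :=
  match w with
  | inl i => z i
  | inr (inl true) => u
  | inr (inl false) => v
  | inr (inr (inl i)) => nth (gone G) xs i
  | inr (inr (inr i)) => nth (gone G) ys i
  end.

Definition holds_phi (G : group) (m r : nat) (chi : qfpos (phivar m r))
  (z : 'I_m -> G) : Prop :=
  AE r (fun xs ys => qeval (phi_env z xs ys) chi).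

Definition holds_theta (G : group) (m r : nat) (Sigma : seq (term (thetavar m r)))
  (z : 'I_m -> G) (u v : G) : Prop :=
  AE r (fun xs ys => sys_eval (theta_env z u v xs ys) Sigma).

(* a sentence (given by its truth value in each group) is non-trivial if it
   is false in some non-abelian free group *)
Definition nontrivial (S : group -> Prop) : Prop :=
  exists F : group, nonabelian_free F /\ ~ S F.

(* Conjunctions of equations are systems of equations, so only disjunctions have
   to be eliminated.  Replace [a = 1 \/ b = 1] by the system
   [[a, b] = [a, b ^ u] = [a, b ^ v] = 1], which it implies in every group.
   Conversely, suppose that commutation is transitive on nontrivial elements and
   that a nontrivial [b] commuting with [b ^ g] forces [g] to commute with [b].
   If [a, b <> 1] solve the system, then [b] commutes with [b ^ u] and [b ^ v],
   hence with [u] and [v], so [u] and [v] commute.  Non-abelian free groups have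
   both properties because the centralizer of a nontrivial element is infinite
   cyclic; in the model of reduced words this follows, after cyclic reduction,
   from the fact that the words commuting with a given nonempty word are the
   powers of one word.  For the last clause, a non-abelian free group contains
   two elements that do not commute, to be substituted for [u] and [v]. *)

From Pilot Require Import Defs.
From HB Require Import structures.
From mathcomp Require Import all_boot zify boolp.
From Stdlib Require List.
Set Implicit Arguments.
Unset Strict Implicit.
Unset Printing Implicit Defensive.

Section GroupAxioms.
Variable G : group.

Lemma gmulgV : right_inverse (gone G) (@ginv G) (@gmul G).
Proof.
move=> x; have VVx := gmulV (ginv x).
by rewrite -[gmul x _]gmul1 -{1}VVx -gmulA (gmulA (ginv x)) gmulV gmul1.
Qed.

Lemma gmulg1 : right_id (gone G) (@gmul G).
Proof. by move=> x; rewrite -(gmulV x) gmulA gmulgV gmul1. Qed.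

End GroupAxioms.

HB.instance Definition _ (G : group) := gen_eqMixin (carrier G).
HB.instance Definition _ (G : group) := gen_choiceMixin (carrier G).
HB.instance Definition _ (G : group) :=
  isGroup.Build (carrier G)
    (@gmulA G) (@gmul1 G) (@gmulg1 G) (@gmulV G) (@gmulgV G).

Lemma commutator_eq1 (G : group) (x y : G) : commutator x y = 1%g <-> commute x y.
Proof.
rewrite -[commutator x y]/(x^-1 * y^-1 * (x * y))%g -invgM.
split=> [/mulg1_eq | E]; first by rewrite invgK.
by rewrite E mulVg.
Qed.

(** * Commutation in groups *)

Section Commutation.
Variable G : groupType.
Implicit Types b g r x y z : G.
Local Open Scope group_scope.

Lemma commute_conjg g x y : commute (x ^ g) (y ^ g) <-> commute x y.
Proof. by rewrite /commute -!conjMg; split=> [/conjg_inj | ->]. Qed.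

Lemma commute_conjg_fix g x : commute g x <-> x ^ g = x.
Proof.
by split=> [/commute_sym/commgP/conjg_fixP | /conjg_fixP/commgP/commute_sym].
Qed.

Definition in_cyclic r y := exists n, y = r ^+ n \/ y = r^-1 ^+ n.

Lemma in_cyclic_commute r y z : in_cyclic r y -> commute r z -> commute z y.
Proof.
by move=> [n [->|->]] /commute_sym Ezr; apply: commuteX; last apply: commuteV.
Qed.

Lemma in_cyclic_id r : in_cyclic r r.
Proof. by exists 1%N; left; rewrite expg1. Qed.

Lemma in_cyclic_conjg g r y : in_cyclic r y -> in_cyclic (r ^ g) (y ^ g).
Proof. by move=> [n [->|->]]; exists n; rewrite conjXg ?conjVg; [left | right]. Qed.

Lemma centralizer_conjg g x r :
    (forall y, commute x y <-> in_cyclic r y) ->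
  forall y, commute (x ^ g) y <-> in_cyclic (r ^ g) y.
Proof.
move=> Cx y; rewrite -(conjgKV g y) commute_conjg Cx.
split; first exact: in_cyclic_conjg.
by move/(in_cyclic_conjg g^-1); rewrite !conjgK.
Qed.

Definition cyclic_centralizers :=
  forall x, x <> 1 -> exists r, forall y, commute x y <-> in_cyclic r y.

Definition torsion_free := forall x n, x ^+ n.+1 = 1 -> x = 1.

Definition commute_transitive :=
  forall x y z, x <> 1 -> commute x y -> commute x z -> commute y z.

Definition commuting_conjugates :=
  forall b g, b <> 1 -> commute b (b ^ g) -> commute g b.

Lemma cyclic_centralizers_transitive :
  cyclic_centralizers -> commute_transitive.
Proof.
move=> CC x y z /CC[r Cx] /Cx Ey /Cx Ez.
exact/commute_sym/(in_cyclic_commute Ey)/(in_cyclic_commute Ez)/commute_refl.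
Qed.

Section TorsionFree.
Hypothesis TF : torsion_free.

Lemma expg_fixed r n : r <> 1 -> r = r ^+ n -> n = 1%N.
Proof.
case: n => [|[|n]] // r1 E; case: r1; apply: (TF (n := n)); apply: (@mulgI _ r).
by rewrite mulg1 -expgS -E.
Qed.

Lemma expVg_fixed r n : r = r^-1 ^+ n -> r = 1.
Proof. by move=> E; apply: (TF (n := n)); rewrite expgSr {2}E expVgn mulgV. Qed.

Lemma conjg_cyclic_sign g r : r <> 1 ->
    in_cyclic r (r ^ g) -> in_cyclic r (r ^ g^-1) -> r ^ g = r \/ r ^ g = r^-1.
Proof.
move=> r1 [a Ea] [c Ec].
have Er : r = r ^+ (a * c) \/ r = r^-1 ^+ (a * c).
  case: Ec => Ec; case: Ea => Ea; [left | right | right | left];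
  by rewrite -{1}(conjgKV g r) Ec conjXg ?conjVg Ea ?expVgn ?invgK expgnA.
have a1 : a = 1%N.
  case: Er => [/(expg_fixed r1)/eqP | /expVg_fixed //].
  by rewrite muln_eq1 => /andP[/eqP].
by rewrite a1 !expg1 in Ea.
Qed.

Lemma conjg_neq_inv g r : commute_transitive -> r <> 1 -> r ^ g <> r^-1.
Proof.
move=> CT r1 Er.
have Egr : commute g r.
  have /commute_conjg_fix Eg2 : r ^ (g * g) = r by rewrite conjgM Er conjVg Er invgK.
  have [g2 | g2] := pselect (g * g = 1).
    have -> : g = 1 by apply: (TF (n := 1%N)); rewrite expg2.
    exact/commute_sym/commute1.
  by apply: CT g2 _ Eg2; rewrite /commute mulgA.
have Err : r = r^-1 by rewrite -Er; symmetry; apply/commute_conjg_fix.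
by apply: r1; apply: (TF (n := 1%N)); rewrite expg2 {2}Err mulgV.
Qed.

Lemma cyclic_centralizers_commuting_conjugates :
  cyclic_centralizers -> commuting_conjugates.
Proof.
move=> CC b g b1 Ebd; have CT := cyclic_centralizers_transitive CC.
have [r Cb] := CC b b1; have /Cb b_r := commute_refl b.
have r1 : r <> 1 by move=> r1; apply: b1; case: b_r => n; rewrite r1 invg1 expg1n; case.
have d1 : b ^ g <> 1 by move/eqP; rewrite conjg_eq1 => /eqP.
have Cbd y : commute b y <-> commute (b ^ g) y.
  by split=> Ey; [apply: CT Ey | apply: CT (commute_sym Ebd) Ey].
have Ebr : commute b r by apply/Cb/in_cyclic_id.
have rg_cyc : in_cyclic r (r ^ g) by apply/Cb/Cbd/commute_conjg.
have rg'_cyc : in_cyclic r (r ^ g^-1).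
  by apply/Cb; rewrite -(conjgK g b) commute_conjg; apply/Cbd.
have Egr : commute g r.
  apply/commute_conjg_fix.
  by case: (conjg_cyclic_sign r1 rg_cyc rg'_cyc) => // /(conjg_neq_inv CT r1).
exact: in_cyclic_commute b_r (commute_sym Egr).
Qed.

End TorsionFree.

Lemma disjunction_of_commutations u v a b :
    commute_transitive -> commuting_conjugates -> ~ commute u v ->
    commute a b -> commute a (b ^ u) -> commute a (b ^ v) ->
  a = 1 \/ b = 1.
Proof.
move=> CT CCj Nuv Eab Eau Eav.
have [a1 | a1] := pselect (a = 1); first by left.
have [b1 | b1] := pselect (b = 1); first by right.
have Eub : commute u b := CCj _ _ b1 (CT _ _ _ a1 Eab Eau).
have Evb : commute v b := CCj _ _ b1 (CT _ _ _ a1 Eab Eav).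
by case: Nuv; apply: CT _ _ _ b1 (commute_sym Eub) (commute_sym Evb).
Qed.

End Commutation.

(** * Words and free groups *)

Section CommutingWords.
Variable T : Type.
Implicit Types c u w x y z : seq T.

Lemma cat_injl u : injective (cat u).
Proof. by elim: u => //= a u IH x y [/IH]. Qed.

Definition catpow w n := iter n (cat w) [::].

Lemma size_catpow w n : size (catpow w n) = n * size w.
Proof. by elim: n => //= n IH; rewrite size_cat IH mulSn. Qed.

Lemma catpow_commute w x n : x ++ w = w ++ x -> x ++ catpow w n = catpow w n ++ x.
Proof.
move=> Exw; elim: n => [|n IH] /=; first by rewrite cats0.
by rewrite catA Exw -catA IH catA.
Qed.

Lemma commute_suffix w x y :
  x ++ w = w ++ x -> (x ++ y) ++ w = w ++ x ++ y -> y ++ w = w ++ y.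
Proof.
by move=> Exw Exyw; apply: (@cat_injl x); rewrite catA Exyw [RHS]catA Exw catA.
Qed.

(* Both [x] and [y] are prefixes of [catpow w (size y)]. *)
Lemma commute_prefix w x y : w <> [::] ->
    x ++ w = w ++ x -> y ++ w = w ++ y -> size x <= size y ->
  y = x ++ drop (size x) y.
Proof.
move=> w0 Exw Eyw le_xy; set p := catpow w (size y).
have le_yp : size y <= size p by rewrite size_catpow leq_pmulr //; case: (w) w0.
have prefix_p v : v ++ w = w ++ v -> size v <= size p -> take (size v) p = v.
  by move=> Evw le_vp; rewrite -(takel_cat v le_vp) -catpow_commute // take_size_cat.
rewrite -{1}(cat_take_drop (size x) y); congr (_ ++ _).
by rewrite -(prefix_p y) // take_takel // prefix_p //; apply: leq_trans le_yp.
Qed.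

Lemma commuting_words_root c : c <> [::] ->
  exists rho, [/\ rho <> [::], rho ++ c = c ++ rho &
    forall z, z ++ c = c ++ z -> exists k, z = catpow rho k].
Proof.
move=> c0.
pose P n := `[< exists2 z, z <> [::] /\ z ++ c = c ++ z & size z = n >].
have exP : exists n, P n by exists (size c); apply/asboolP; exists c.
(* [rho] is a shortest nonempty word commuting with [c]. *)
have [n /asboolP[rho [rho0 Erc] size_rho] min_n] := ex_minnP exP.
exists rho; split=> // z.
elim: {z}(size z) {-2}z (leqnn (size z)) => [|m IH] z le_zm Ezc.
  by exists 0; case: z le_zm Ezc.
have [-> | z0] := pselect (z = [::]); first by exists 0.
have le_rz : size rho <= size z.
  by rewrite size_rho; apply: min_n; apply/asboolP; exists z.
have Ez := commute_prefix c0 Erc Ezc le_rz.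
have [k Ek] : exists k, drop (size rho) z = catpow rho k.
  apply: IH; last by apply: (commute_suffix Erc); rewrite -Ez.
  have : size rho > 0 by case: (rho) rho0.
  by move: le_zm; rewrite {1}Ez size_cat; lia.
by exists k.+1; rewrite Ez Ek.
Qed.

End CommutingWords.

Lemma sorted_cat3 (T : Type) (e : rel T) u v w : v <> [::] ->
  sorted e (u ++ v) -> sorted e (v ++ w) -> sorted e (u ++ v ++ w).
Proof.
move=> v0; elim: u => [|a u IH] //= Ruv Rvw.
case: u IH Ruv => [|b u] /= IH.
  by case: v {IH} v0 Rvw => [|b v] //= _ Rvw /andP[-> _].
by case/andP=> -> Rbuv; apply: IH.
Qed.

Section ReducedWords.
Local Open Scope group_scope.
Variable I : eqType.
(* The letters [(i, true)] and [(i, false)] stand for the generator [i] and its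
   inverse. *)
Local Notation letter := (I * bool)%type.
Implicit Types (x y : letter) (u v w : seq letter).

Definition linv x : letter := (x.1, ~~ x.2).

Lemma linvK : involutive linv.
Proof. by case=> i b; rewrite /linv negbK. Qed.

Lemma linv_neq x : x != linv x.
Proof. by case: x => i []; rewrite /linv xpair_eqE eqxx. Qed.

Definition reduced w := sorted (fun x y => y != linv x) w.

Lemma reduced_catl u v : reduced (u ++ v) -> reduced u.
Proof. by case/cat_sorted2. Qed.

Lemma reduced_catr u v : reduced (u ++ v) -> reduced v.
Proof. by case/cat_sorted2. Qed.

Lemma reduced_rcons_cons u x y v :
  reduced (rcons u x ++ y :: v) =
    [&& reduced (rcons u x), y != linv x & reduced (y :: v)].
Proof.
rewrite /reduced sorted_cat_cons andbA; congr (_ && _).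
by case: u => [|a u] /=; rewrite ?rcons_path ?last_rcons ?andbT.
Qed.

Definition redcons x w :=
  if w is y :: w' then if y == linv x then w' else x :: w else [:: x].

Definition redcat u v := foldr redcons v u.

Definition invw u := rev (map linv u).

Lemma reduced_redcons x w : reduced w -> reduced (redcons x w).
Proof.
case: w => [|y w] //= Rw; case: ifP => [_ | /negbT Nyx]; first exact: path_sorted Rw.
by rewrite /= Nyx.
Qed.

Lemma reduced_redcat u v : reduced v -> reduced (redcat u v).
Proof. by move=> Rv; elim: u => //= x u; apply: reduced_redcons. Qed.

Lemma redconsK x w : reduced w -> redcons x (redcons (linv x) w) = w.
Proof.
case: w => [|y w] /=; first by rewrite eqxx.
rewrite linvK; case: eqP => [-> | _] Rw /=; last by rewrite eqxx.
by case: w Rw => [|z w] //= /andP[/negbTE ->].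
Qed.

Lemma redcat_redcons s x w :
  reduced w -> redcat (redcons x s) w = redcons x (redcat s w).
Proof.
case: s => [|y s] //= Rw; case: eqP => // ->.
by rewrite redconsK //; apply: reduced_redcat.
Qed.

Lemma redcatA u v w : reduced w -> redcat (redcat u v) w = redcat u (redcat v w).
Proof. by move=> Rw; elim: u => //= x u IH; rewrite redcat_redcons // IH. Qed.

Lemma redcat_rcons u x v : redcat (rcons u x) v = redcat u (redcons x v).
Proof. by rewrite /redcat foldr_rcons. Qed.

Lemma invw_cons x u : invw (x :: u) = rcons (invw u) (linv x).
Proof. by rewrite /invw /= rev_cons. Qed.

Lemma invw_rcons x u : invw (rcons u x) = linv x :: invw u.
Proof. by rewrite /invw map_rcons rev_rcons. Qed.

Lemma invwK : involutive invw.
Proof. by move=> u; rewrite /invw map_rev revK -map_comp (eq_map linvK) map_id. Qed.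

Lemma redcatVw u : reduced u -> redcat (invw u) u = [::].
Proof.
elim: u => [|x u IH] // Ru.
by rewrite invw_cons redcat_rcons /= linvK eqxx IH //; apply: path_sorted Ru.
Qed.

Lemma redcat_cat u v : reduced (u ++ v) -> redcat u v = u ++ v.
Proof.
elim: u => [|x u IH] //= Ruv; rewrite IH; last exact: path_sorted Ruv.
by case: (u ++ v) Ruv => //= y t /andP[/negbTE ->].
Qed.

Lemma reduced_invw u : reduced u -> reduced (invw u).
Proof.
rewrite /reduced /invw rev_sorted sorted_map.
by apply: sub_sorted => x y /=; rewrite linvK eq_sym.
Qed.

Definition rword := {w | reduced w}.

Definition rword_mul (a b : rword) : rword :=
  exist _ (redcat (val a) (val b)) (reduced_redcat _ (valP b)).

Definition rword_inv (a : rword) : rword :=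
  exist _ (invw (val a)) (reduced_invw (valP a)).

Definition rword_one : rword := exist _ [::] isT.

Lemma rword_mulA a b c :
  rword_mul a (rword_mul b c) = rword_mul (rword_mul a b) c.
Proof. by apply: val_inj; rewrite /= redcatA //; apply: valP. Qed.

Lemma rword_mul1 a : rword_mul rword_one a = a.
Proof. exact: val_inj. Qed.

Lemma rword_mulV a : rword_mul (rword_inv a) a = rword_one.
Proof. by apply: val_inj; rewrite /= redcatVw //; apply: valP. Qed.

Definition free_group : group :=
  @Defs.Group rword rword_mul rword_inv rword_one rword_mulA rword_mul1 rword_mulV.

Definition free_gen (i : I) : free_group := exist _ [:: (i, true)] isT.

Section Evaluation.
Variables (G : group) (f : I -> G).

Definition eval_letter x : G := if x.2 then f x.1 else (f x.1)^-1.

Definition eval_word w : G := foldr (fun x g => eval_letter x * g) 1 w.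

Lemma eval_redcons x w : eval_word (redcons x w) = eval_letter x * eval_word w.
Proof.
case: w => [|y w] //=; case: eqP => // ->.
by rewrite mulgA; case: x => i [] /=; rewrite /eval_letter /= ?mulgV ?mulVg mul1g.
Qed.

Lemma eval_redcat u v : eval_word (redcat u v) = eval_word u * eval_word v.
Proof. by elim: u => [|x u IH] /=; rewrite ?mul1g // eval_redcons IH mulgA. Qed.

Definition eval_free (a : free_group) : G := eval_word (val a).

Lemma eval_free_hom : is_hom eval_free.
Proof. by move=> a b; apply: eval_redcat. Qed.

Lemma eval_free_gen i : eval_free (free_gen i) = f i.
Proof. exact: mulg1. Qed.

End Evaluation.
End ReducedWords.

(** * Centralizers in free groups *)

Section CyclicReduction.
Variable I : eqType.
Implicit Types (x y : I * bool) (c m p u v w : seq (I * bool)).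

Definition cyclically_reduced c := reduced (c ++ c).

Lemma reduced_catpow c n : cyclically_reduced c -> reduced (catpow c n).
Proof.
move=> Rcc; elim: n => [|[|n] IH] //=; first by rewrite cats0; apply: reduced_catl Rcc.
by case: c Rcc IH => // y c Rcc IH; apply: sorted_cat3.
Qed.

Lemma size_redcat u v : size (redcat u v) <= size u + size v.
Proof.
elim: u => [|x u IH] //=.
case: (redcat u v) IH => [|y t] /= IH; first lia.
by case: eqP => _ /=; lia.
Qed.

Lemma size_redcat_lt u v : reduced u -> reduced v -> ~~ reduced (u ++ v) ->
  size (redcat u v) < size u + size v.
Proof.
case/lastP: u => [|u x] Ru; first by move=> ->.
case: v => [|y v] Rv; first by rewrite cats0 Ru.
rewrite reduced_rcons_cons Ru Rv andbT negbK => /eqP Eyx.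
rewrite redcat_rcons /= Eyx eqxx size_rcons /=.
by have := size_redcat u v; lia.
Qed.

Lemma commute_reduced_cat u v : reduced u -> reduced v ->
  redcat u v = redcat v u -> reduced (u ++ v) -> u ++ v = v ++ u.
Proof.
move=> Ru Rv Euv Ruv; rewrite -(redcat_cat Ruv) Euv.
have [/redcat_cat // | Nvu] := boolP (reduced (v ++ u)).
have := size_redcat_lt Rv Ru Nvu.
by rewrite -Euv (redcat_cat Ruv) size_cat addnC ltnn.
Qed.

Lemma reduced_cat_invw c w : cyclically_reduced c -> reduced w ->
  ~~ reduced (w ++ c) -> reduced (c ++ invw w).
Proof.
move=> Rcc; case/lastP: w => [|w l] Rw; first by rewrite (reduced_catl Rcc).
case: c Rcc => [|y c] Rcc; first by rewrite cats0 Rw.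
rewrite reduced_rcons_cons Rw (reduced_catl Rcc) andbT negbK => /eqP Eyl.
have Rcy : reduced ((y :: c) ++ [:: y]).
  by apply: (reduced_catl (v := c)); rewrite -catA.
have Ryw : reduced ([:: y] ++ invw w).
  by rewrite cat1s Eyl -invw_rcons; apply: reduced_invw.
by rewrite invw_rcons -Eyl -[y :: invw w]cat1s; apply: sorted_cat3.
Qed.

Lemma commute_cyclically_reduced c w : cyclically_reduced c -> reduced w ->
    redcat c w = redcat w c -> redcat c (invw w) = redcat (invw w) c ->
  c ++ w = w ++ c \/ c ++ invw w = invw w ++ c.
Proof.
move=> Rcc Rw Ecw Eciw; have Rc := reduced_catl Rcc.
have [Rwc | Nwc] := boolP (reduced (w ++ c)).
  by left; symmetry; apply: commute_reduced_cat.
by right; apply: commute_reduced_cat; rewrite ?reduced_invw // reduced_cat_invw.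
Qed.

Lemma cyclic_reduction w : reduced w -> w <> [::] ->
  exists p c, [/\ cyclically_reduced c, c <> [::] & w = p ++ c ++ invw p].
Proof.
elim: {w}(size w) {-2}w (leqnn (size w)) => [|n IH] w le_wn Rw w0.
  by case: w Rw le_wn w0.
have [Rww | Nww] := boolP (cyclically_reduced w).
  by exists [::], w; rewrite cats0.
case: w w0 Rw Nww le_wn => [|x w] // _; case/lastP: w => [|m l] Rw.
  by rewrite /cyclically_reduced /= linv_neq.
rewrite /cyclically_reduced -{1}rcons_cons reduced_rcons_cons rcons_cons Rw andbT negbK.
move=> /eqP Exl le_wn.
have m0 : m <> [::] by move=> m0; move: Rw; rewrite m0 /= Exl linvK eqxx.
have Rm : reduced m by move/path_sorted: Rw; rewrite -cats1 => /reduced_catl.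
have [|q [c [Rcc c0 Em]]] := IH m _ Rm m0.
  by move: le_wn; rewrite /= size_rcons; lia.
by exists (x :: q), c; rewrite invw_cons Em Exl linvK /= !rcons_cat.
Qed.

End CyclicReduction.

Section FreeGroupCentralizers.
Local Open Scope group_scope.
Variable I : eqType.
Local Notation F := (free_group I).
Implicit Types a c p x y : F.

Lemma val_mul a b : val (a * b) = redcat (val a) (val b). Proof. by []. Qed.

Lemma val_inv a : val a^-1 = invw (val a). Proof. by []. Qed.

Lemma val_expg a n : reduced (catpow (val a) n) -> val (a ^+ n) = catpow (val a) n.
Proof.
elim: n => [|n IH] // Ran.
by rewrite expgS val_mul IH ?redcat_cat //; apply: reduced_catr Ran.
Qed.

Lemma conjg_cyclic_reduction x : x <> 1 ->
  exists p c, [/\ cyclically_reduced (val c), val c <> [::] & x = c ^ p].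
Proof.
move=> x1; have x0 : val x <> [::] by move=> E; apply: x1; apply: val_inj.
have [p [c [Rcc c0 Ex]]] := cyclic_reduction (valP x) x0.
have Rx : reduced (p ++ c ++ invw p) by rewrite -Ex; apply: valP.
have Rciw := reduced_catr Rx; have Rp := reduced_catl Rx.
exists (exist _ (invw p) (reduced_invw Rp)), (exist _ c (reduced_catl Rciw)).
split=> //; apply: val_inj; rewrite conjgE !val_mul val_inv /= invwK Ex.
by rewrite (redcat_cat Rciw) (redcat_cat Rx).
Qed.

Lemma cyclically_reduced_centralizer c :
    cyclically_reduced (val c) -> val c <> [::] ->
  exists rho, forall y, commute c y <-> in_cyclic rho y.
Proof.
move=> Rcc c0; have Rc := reduced_catl Rcc.
have [rho [rho0 Erc rho_gen]] := commuting_words_root c0.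
have [[|k] Ec] := rho_gen _ (erefl _); first by case: c0.
have Rrho : reduced rho by move: Rc; rewrite Ec => /reduced_catl.
have Rcrho : reduced (val c ++ rho).
  by move: Rcc; rewrite /cyclically_reduced {2}Ec /= catA => /reduced_catl.
pose r : F := exist _ rho Rrho.
have Erc_g : commute r c.
  by apply: val_inj; rewrite !val_mul /= !redcat_cat ?Erc.
have in_r (z : F) : val z ++ val c = val c ++ val z -> exists k, z = r ^+ k.
  move=> /rho_gen[n Ez]; exists n; apply: val_inj.
  by rewrite val_expg /= -Ez //; apply: valP.
exists r => y; split=> [Ecy | /in_cyclic_commute]; last exact.
have Ecy' : commute c y^-1 by apply: commuteV.
case: (commute_cyclically_reduced Rcc (valP y) (congr1 val Ecy) (congr1 val Ecy'))
  => [Ey | Eyi].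
  by have [n ->] := in_r y (esym Ey); exists n; left.
have [n Eyn] := in_r y^-1 (esym Eyi).
by exists n; right; rewrite expVgn -Eyn invgK.
Qed.

Lemma cyclically_reduced_expg_neq1 c n :
  cyclically_reduced (val c) -> val c <> [::] -> c ^+ n.+1 <> 1.
Proof.
move=> Rcc c0 /(congr1 val); rewrite val_expg ?reduced_catpow //.
by case: (val c) c0.
Qed.

Lemma free_group_torsion_free : torsion_free F.
Proof.
move=> x n xn; apply: contrapT => /conjg_cyclic_reduction[p [c [Rcc c0 Ex]]].
apply: (cyclically_reduced_expg_neq1 (n := n) Rcc c0).
by apply/eqP; rewrite -(conjg_eq1 _ p) conjXg -Ex xn.
Qed.

Lemma free_group_cyclic_centralizers : cyclic_centralizers F.
Proof.
move=> x /conjg_cyclic_reduction[p [c [Rcc c0 ->]]].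
have [rho Cc] := cyclically_reduced_centralizer Rcc c0.
by exists (rho ^ p); apply: centralizer_conjg.
Qed.

End FreeGroupCentralizers.

Section Homomorphisms.
Local Open Scope group_scope.
Variables (G H : groupType) (h : G -> H).
Hypothesis hM : {morph h : x y / x * y}.
Implicit Types g x y : G.

Lemma hom1 : h 1 = 1.
Proof. by apply: (@mulgI _ (h 1)); rewrite -hM !mulg1. Qed.

Lemma homV x : h x^-1 = (h x)^-1.
Proof. by apply: (@mulIg _ (h x)); rewrite -hM !mulVg hom1. Qed.

Lemma hom_conjg x g : h (x ^ g) = h x ^ h g.
Proof. by rewrite !conjgE !hM homV. Qed.

Hypothesis h_inj : injective h.

Lemma inj_hom_commute x y : commute (h x) (h y) <-> commute x y.
Proof. by rewrite /commute -!hM; split=> [/h_inj | ->]. Qed.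

Lemma inj_hom_neq1 x : x <> 1 -> h x <> 1.
Proof. by move=> x1; rewrite -hom1 => /h_inj. Qed.

Lemma inj_hom_commute_transitive :
  commute_transitive H -> commute_transitive G.
Proof.
move=> CT x y z /inj_hom_neq1 hx1 /inj_hom_commute Exy /inj_hom_commute Exz.
exact/inj_hom_commute/(CT _ _ _ hx1 Exy Exz).
Qed.

Lemma inj_hom_commuting_conjugates :
  commuting_conjugates H -> commuting_conjugates G.
Proof.
move=> CCj b g /inj_hom_neq1 hb1 /inj_hom_commute; rewrite hom_conjg => Ebd.
exact/inj_hom_commute/(CCj _ _ hb1 Ebd).
Qed.

End Homomorphisms.

Lemma free_on_embedding (F : group) (I : Type) (b : I -> F) : free_on b ->
  exists h : F -> free_group {classic I},
    [/\ is_hom h, injective h & forall i, h (b i) = @free_gen {classic I} i].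
Proof.
(* Evaluation in [F] is a left inverse of [h], by uniqueness in the universal
   property of [F]. *)
move=> Fb; have [h [hM hb _]] := Fb _ (@free_gen {classic I}).
have [idF [_ _ id_unique]] := Fb F b.
pose ev := @eval_free {classic I} F b.
have evalK x : ev (h x) = x.
  have evalM : is_hom (ev \o h) by move=> y z /=; rewrite hM; apply: eval_free_hom.
  have evalb i : ev (h (b i)) = b i by rewrite hb; apply: eval_free_gen.
  transitivity (idF x); first exact: id_unique _ evalM evalb x.
  exact: esym (id_unique id (fun _ _ => erefl) (fun _ => erefl) x).
by exists h; split=> //; apply: can_inj evalK.
Qed.

Section NonabelianFree.
Variable F : group.
Hypothesis Ffree : nonabelian_free F.

Lemma nonabelian_free_commute_transitive : commute_transitive F.
Proof.
have [I [b [/free_on_embedding[h [hM h_inj _]] _]]] := Ffree.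
apply: inj_hom_commute_transitive hM h_inj _.
exact/cyclic_centralizers_transitive/free_group_cyclic_centralizers.
Qed.

Lemma nonabelian_free_commuting_conjugates : commuting_conjugates F.
Proof.
have [I [b [/free_on_embedding[h [hM h_inj _]] _]]] := Ffree.
apply: inj_hom_commuting_conjugates hM h_inj _.
apply: cyclic_centralizers_commuting_conjugates.
  exact: free_group_torsion_free.
exact: free_group_cyclic_centralizers.
Qed.

Lemma nonabelian_free_noncommuting : exists u v : F, ~ commute u v.
Proof.
have [I [b [/free_on_embedding[h [hM h_inj hb]] [i [j ij]]]]] := Ffree.
exists (b i), (b j); rewrite -(inj_hom_commute hM h_inj) !hb => /(congr1 val) /=.
by rewrite /linv !xpair_eqE /= !andbF => -[].
Qed.

End NonabelianFree.

(** * Encoding positive formulas by systems of equations *)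

Fixpoint tmap (V V' : Type) (f : V -> V') (t : term V) : term V' :=
  match t with
  | tvar v => tvar (f v)
  | tone => tone
  | tmul a b => tmul (tmap f a) (tmap f b)
  | tinv a => tinv (tmap f a)
  end.

Section TermSemantics.
Local Open Scope group_scope.
Variables (G : group) (V : Type).
Implicit Types (e : V -> G) (S : seq (term V)).

Lemma teval_tmap V' (e : V' -> G) (f : V -> V') t :
  teval e (tmap f t) = teval (e \o f) t.
Proof. by elim: t => [x | | a IHa b IHb | a IHa] /=; rewrite ?IHa ?IHb. Qed.

Lemma eq_teval e1 e2 t : e1 =1 e2 -> teval e1 t = teval e2 t.
Proof. by move=> E; elim: t => [x | | a IHa b IHb | a IHa] /=; rewrite ?IHa ?IHb. Qed.

Lemma sys_evalP e S : sys_eval e S <-> forall w, List.In w S -> teval e w = 1.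
Proof.
elim: S => [|w S IH]; first by split.
rewrite /sys_eval /= -/(sys_eval e S) IH.
split=> [[Ew ES] w' [<- // | /ES //] | ES].
by split=> [|w' Sw']; apply: ES; [left | right].
Qed.

Lemma sys_eval_cat e S1 S2 : sys_eval e (S1 ++ S2) <-> sys_eval e S1 /\ sys_eval e S2.
Proof.
rewrite !sys_evalP; split=> [E | [E1 E2] w /List.in_app_iff[/E1 | /E2] //].
by split=> w Sw; apply: E; apply/List.in_app_iff; [left | right].
Qed.

End TermSemantics.

Section DisjunctionEncoding.
Local Open Scope group_scope.
Variables (V : Type) (u v : term V).

Definition tcommutator (a b : term V) := tmul (tmul (tinv a) (tinv b)) (tmul a b).

Definition tconjg (a g : term V) := tmul (tinv g) (tmul a g).

Definition or_words a b :=
  [:: tcommutator a b; tcommutator a (tconjg b u); tcommutator a (tconjg b v)].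

Definition or_system (A B : seq (term V)) :=
  List.flat_map (fun a => List.flat_map (or_words a) B) A.

Variables (G : group) (e : V -> G).

Lemma sys_eval_or_words a b : sys_eval e (or_words a b) <->
  [/\ commute (teval e a) (teval e b),
       commute (teval e a) (teval e b ^ teval e u) &
       commute (teval e a) (teval e b ^ teval e v)].
Proof. by rewrite /sys_eval /= !commutator_eq1; split=> [[? [? [? _]]] | []]. Qed.

Lemma or_words_sound a b :
  teval e a = 1 \/ teval e b = 1 -> sys_eval e (or_words a b).
Proof.
rewrite sys_eval_or_words; case=> ->; first by split; apply/commute_sym/commute1.
by rewrite !conj1g; split; apply: commute1.
Qed.

Lemma or_system_sound A B :
  sys_eval e A \/ sys_eval e B -> sys_eval e (or_system A B).
Proof.
rewrite !sys_evalP => AB w /List.in_flat_map[a [Aa /List.in_flat_map[b [Bb]]]].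
have /sys_evalP : sys_eval e (or_words a b).
  by apply: or_words_sound; case: AB => [EA | EB]; [left; apply: EA | right; apply: EB].
by apply.
Qed.

Hypotheses (CT : commute_transitive G) (CCj : commuting_conjugates G).
Hypothesis Nuv : ~ commute (teval e u) (teval e v).

Lemma or_words_complete a b :
  sys_eval e (or_words a b) -> teval e a = 1 \/ teval e b = 1.
Proof.
rewrite sys_eval_or_words => -[Eab Eau Eav].
exact: disjunction_of_commutations CT CCj Nuv Eab Eau Eav.
Qed.

Lemma or_system_complete A B :
  sys_eval e (or_system A B) -> sys_eval e A \/ sys_eval e B.
Proof.
rewrite !sys_evalP => EAB; apply: contrapT.
case/not_orP=> /existsNP[a /not_implyP[Aa a1]] /existsNP[b /not_implyP[Bb b1]].
have /or_words_complete[] // : sys_eval e (or_words a b).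
apply/sys_evalP => w ab_w; apply: EAB.
by apply/List.in_flat_map; exists a; split=> //; apply/List.in_flat_map; exists b.
Qed.

End DisjunctionEncoding.

Section PositiveFormulaEncoding.
Local Open Scope group_scope.
Variables m r : nat.

Definition lift_var (w : phivar m r) : thetavar m r :=
  match w with inl i => inl i | inr w' => inr (inr w') end.

Definition tvar_u : term (thetavar m r) := tvar (inr (inl true)).
Definition tvar_v : term (thetavar m r) := tvar (inr (inl false)).

Fixpoint qf_system (f : qfpos (phivar m r)) : seq (term (thetavar m r)) :=
  match f with
  | qeq s t => [:: tmul (tmap lift_var s) (tinv (tmap lift_var t))]
  | qand f g => qf_system f ++ qf_system g
  | qor f g => or_system tvar_u tvar_v (qf_system f) (qf_system g)
  end.

Lemma theta_env_lift (G : group) (z : 'I_m -> G) u v xs ys :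
  theta_env z u v xs ys \o lift_var =1 phi_env z xs ys.
Proof. by case=> [i | [i | i]]. Qed.

Variables (G : group) (e : thetavar m r -> G) (e0 : phivar m r -> G).
Hypothesis He : e \o lift_var =1 e0.

Lemma sys_eval_qeq s t :
  sys_eval e (qf_system (qeq s t)) <-> teval e0 s = teval e0 t.
Proof.
rewrite /sys_eval /= !teval_tmap !(eq_teval _ He).
by split=> [[/divg1_eq] | ->] //; split=> //; apply: mulgV.
Qed.

Lemma qf_system_sound f : qeval e0 f -> sys_eval e (qf_system f).
Proof.
elim: f => [s t | f IHf g IHg | f IHf g IHg] /=; first by move/sys_eval_qeq.
  by move=> [/IHf Sf /IHg Sg]; apply/sys_eval_cat.
by move=> fg; apply: or_system_sound; case: fg => [/IHf | /IHg]; [left | right].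
Qed.

Hypotheses (CT : commute_transitive G) (CCj : commuting_conjugates G).
Hypothesis Nuv : ~ commute (e (inr (inl true))) (e (inr (inl false))).

Lemma qf_system_complete f : sys_eval e (qf_system f) -> qeval e0 f.
Proof.
elim: f => [s t | f IHf g IHg | f IHf g IHg] /=; first by move/sys_eval_qeq.
  by move/sys_eval_cat => [/IHf Sf /IHg Sg].
case/(or_system_complete (u := tvar_u) (v := tvar_v) CT CCj Nuv).
  by move/IHf; left.
by move/IHg; right.
Qed.

End PositiveFormulaEncoding.

Lemma AE_mono (G : group) n (P Q : seq G -> seq G -> Prop) :
  (forall xs ys, P xs ys -> Q xs ys) -> AE n P -> AE n Q.
Proof.
elim: n P Q => [|n IH] P Q PQ /=; first exact: PQ.
move=> AEP x; have [y Py] := AEP x; exists y.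
by apply: IH Py => xs ys; apply: PQ.
Qed.

Section Holds.
Variables (m r : nat) (chi : qfpos (phivar m r)) (G : group).
Variables (z : 'I_m -> G) (u v : G).

Lemma holds_theta_of_phi : holds_phi chi z -> holds_theta (qf_system chi) z u v.
Proof.
by apply: AE_mono => xs ys /=; apply/(qf_system_sound (theta_env_lift z u v xs ys)).
Qed.

Lemma holds_phi_of_theta :
    commute_transitive G -> commuting_conjugates G -> ~ commute u v ->
  holds_theta (qf_system chi) z u v -> holds_phi chi z.
Proof.
move=> CT CCj Nuv; apply: AE_mono => xs ys /=.
exact/(qf_system_complete (theta_env_lift z u v xs ys) CT CCj Nuv).
Qed.

Lemma nonabelian_free_holds_phi_of_theta : nonabelian_free G -> ~ commute u v ->
  holds_theta (qf_system chi) z u v -> holds_phi chi z.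
Proof.
move=> Gfree; apply: holds_phi_of_theta.
  exact: nonabelian_free_commute_transitive.
exact: nonabelian_free_commuting_conjugates.
Qed.

End Holds.

Theorem mainTheorem18 (m r : nat) (chi : qfpos (phivar m r)) :
  exists Sigma : seq (term (thetavar m r)),
    [/\ (* valid in every group *)
        (forall (G : group) (z : 'I_m -> G) (u v : G),
            holds_phi chi z -> holds_theta Sigma z u v),
        (* in every non-abelian free group *)
        (forall F : group, nonabelian_free F ->
           forall (z : 'I_m -> F) (u v : F),
             commutator u v = gone F \/
             (holds_phi chi z <-> holds_theta Sigma z u v)) &
        (* in particular, for sentences *)
        (m = 0 ->
         nontrivial (fun G => forall z : 'I_m -> G, holds_phi chi z) ->
         nontrivial (fun G => forall (z : 'I_m -> G) (u v : G),
                                holds_theta Sigma z u v))].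
Proof.
exists (qf_system chi); split=> [G z u v | F Ffree z u v | _ [F [Ffree Nphi]]].
- exact: holds_theta_of_phi.
- have [Euv | Nuv] := pselect (commute u v); [left; exact/commutator_eq1 | right].
  split; first exact: holds_theta_of_phi.
  exact: nonabelian_free_holds_phi_of_theta.
- exists F; split=> // Htheta; apply: Nphi => z.
  have [u [v Nuv]] := nonabelian_free_noncommuting Ffree.
  exact: nonabelian_free_holds_phi_of_theta Nuv (Htheta z u v).
Qed.
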